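(* Let $\mathcal{P}=\langle P,\le\rangle$ be a finite bounded poset with $|P|\ge 2$ and $m\in\mathbb{N}$. If $(R^+_{All})^m(\mathcal{P})$ is graded, then $(R^+)^m(\mathcal{P})$ is graded.
   Context: A poset is bounded if it has a least element $\bot$ and greatest element $\top$. The height $H$ of a finite poset is the number of elements in its largest chain. $a\lessdot b$ denotes covering. A bounded poset with top $\top$ and height $H$ is graded if there is $\rho$ into $\{0,\dots,H-1\}$ with $\rho(\top)=0$ and $\rho(a)=\rho(b)-1$ whenever $a\lessdot b$. For $a\in P$, $\uparrow a=\{b:b\ge a\}$, $\downarrow a=\{b:b\le a\}$ as subposets; the standard interval rank is $R^+(a)=[H(\uparrow a)-1,\;H(\mathcal{P})-H(\downarrow a)]$. Weak order: $[x_*,x^*]\le_W[y_*,y^*]$ iff $x_*\le y_*$ and $x^*\le y^*$. The interval rank poset $R^+(\mathcal{P})$ is the set $\{R^+(a):a\in P\}$ ordered by $\ge_W$; $(R^+)^m$ denotes its $m$-fold iteration (applying the construction to the resulting poset each time). $R^+_{All}(\mathcal{P})=\langle P,\le_{R_A}\rangle$ on the same underlying set, where $p<_{R_A}q$ iff $R^+(p)>_W R^+(q)$, and $\le_{R_A}$ is the reflexive closure of $<_{R_A}$; $(R^+_{All})^m$ is its $m$-fold iteration. *)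

From mathcomp Require Import all_boot.
Set Implicit Arguments. Unset Strict Implicit. Unset Printing Implicit Defensive.

Record fposet (T : eqType) := FPoset { elems : seq T; rle : rel T }.

Section Defs.
Variable T : eqType.
Implicit Types P : fposet T.

Definition is_poset P : Prop :=
  [/\ (forall x, x \in elems P -> rle P x x),
      (forall x y, x \in elems P -> y \in elems P ->
         rle P x y -> rle P y x -> x = y) &
      (forall x y z, x \in elems P -> y \in elems P -> z \in elems P ->
         rle P x y -> rle P y z -> rle P x z)].

Definition is_top P (t : T) : Prop :=
  t \in elems P /\ forall x, x \in elems P -> rle P x t.
Definition is_bot P (b : T) : Prop :=
  b \in elems P /\ forall x, x \in elems P -> rle P b x.

Definition bounded P : Prop :=
  is_poset P /\ (exists t, is_top P t) /\ (exists b, is_bot P b).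

Definition cmp P : rel T := fun x y => rle P x y || rle P y x.

(* height: number of elements of a largest chain (a set of pairwise
   comparable elements); chains are enumerated as masks of the
   duplicate-free carrier. *)
Definition height P : nat :=
  let e := undup (elems P) in
  \max_(b : (size e).-tuple bool | pairwise (cmp P) (mask b e)) size (mask b e).

Definition rlt P (a b : T) : bool := (a != b) && rle P a b.
Definition covers P (a b : T) : Prop :=
  [/\ a \in elems P, b \in elems P, rlt P a b &
      forall c, c \in elems P -> ~ (rlt P a c /\ rlt P c b)].

Definition graded P : Prop :=
  bounded P /\
  exists t, is_top P t /\
  exists rho : T -> nat,
    [/\ rho t = 0,
        (forall a, a \in elems P -> rho a < height P) &
        (forall a b, covers P a b -> rho a = (rho b).+1)].

Definition upset P (a : T) : fposet T :=
  FPoset [seq b <- elems P | rle P a b] (rle P).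
Definition downset P (a : T) : fposet T :=
  FPoset [seq b <- elems P | rle P b a] (rle P).

Definition Rint P (a : T) : (nat * nat)%type :=
  ((height (upset P a)).-1, height P - height (downset P a)).

Definition weakle (x y : (nat * nat)%type) : bool := (x.1 <= y.1) && (x.2 <= y.2).
Definition weaklt (x y : (nat * nat)%type) : bool := (x != y) && weakle x y.

Definition Rplus P : fposet (nat * nat)%type :=
  FPoset [seq Rint P a | a <- elems P] (fun I J => weakle J I).

Definition RAll P : fposet T :=
  FPoset (elems P) (fun p q => (p == q) || weaklt (Rint P q) (Rint P p)).

End Defs.

Fixpoint RAll_iter (T : eqType) (m : nat) (P : fposet T) : fposet T :=
  match m with 0 => P | k.+1 => RAll (RAll_iter k P) end.

(* the carrier type changes after the first application, so the result is
   packaged in a dependent pair *)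
Fixpoint Rplus_iter (T : eqType) (m : nat) (P : fposet T)
  : {U : eqType & fposet U} :=
  match m with
  | 0 => existT (fun U : eqType => fposet U) T P
  | k.+1 => existT (fun U : eqType => fposet U) (nat * nat)%type
              (Rplus (projT2 (Rplus_iter k P)))
  end.

Definition graded_s (X : {U : eqType & fposet U}) : Prop := graded (projT2 X).

From mathcomp Require Import all_boot.
Set Implicit Arguments. Unset Strict Implicit. Unset Printing Implicit Defensive.

(* The map [p |-> R^+(p)] sends R^+_All(Q) onto R^+(Q), and the order of
   R^+_All(Q) is the pullback of the strict order of R^+(Q): p < q iff
   R^+(p) < R^+(q).  Along such a "strict pullback" chains correspond
   (distinct comparable elements have distinct comparable images, and a chain
   downstairs lifts by picking preimages), so heights agree; applied to the
   up- and down-sets, interval ranks agree too, and the relation propagates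
   through the m-fold iterations.  Finally a grading descends along a strict
   pullback: covers downstairs lift to covers upstairs, so the rank of a
   chosen preimage is a rank function. *)

Lemma uniq_pairwiseP (T : eqType) (r : rel T) (s : seq T) :
  symmetric r -> uniq s ->
  reflect {in s &, forall x y, x != y -> r x y} (pairwise r s).
Proof.
move=> r_sym s_uniq.
pose r' x y := (x != y) ==> r x y.
have -> : pairwise r s = all2rel r' s.
  rewrite -pairwise_all2rel; last 2 first.
  - by move=> x; rewrite /r' eqxx.
  - by move=> x y; rewrite /r' eq_sym r_sym.
  have := pairwise_relI (fun x y => x != y) r s.
  have := pairwise_relI (fun x y => x != y) r' s.
  rewrite -uniq_pairwise s_uniq /= => <- <-.
  by apply: eq_pairwise => x y /=; rewrite /r'; case: (x != y).
apply: (iffP (@allrelP _ _ r' s s)) => r_s x y xs ys.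
- by move=> nxy; have := r_s x y xs ys; rewrite /r' nxy.
- by apply/implyP; apply: r_s.
Qed.

Section Chains.
Variables (T : eqType) (P : fposet T).

Definition chain (s : seq T) : Prop :=
  [/\ uniq s, {subset s <= elems P} & {in s &, forall x y, x != y -> cmp P x y}].

Lemma cmp_sym : symmetric (cmp P).
Proof. by move=> x y; rewrite /cmp orbC. Qed.

Lemma chain_size_le_height s : chain s -> size s <= height P.
Proof.
case=> s_uniq sP s_cmp; rewrite /height.
set e := undup (elems P).
pose b := map_tuple (fun x => x \in s) (in_tuple e).
have e_s : perm_eq (mask b e) s.
  rewrite /= -filter_mask; apply: uniq_perm => //.
    by rewrite filter_uniq // undup_uniq.
  move=> x; rewrite mem_filter mem_undup.
  by case xs: (x \in s) => //=; apply: sP.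
rewrite -(perm_size e_s); apply: (leq_bigmax_cond b).
apply/(uniq_pairwiseP cmp_sym); first by rewrite (perm_uniq e_s).
by move=> x y; rewrite !(perm_mem e_s); apply: s_cmp.
Qed.

Lemma height_chain : exists2 s, chain s & size s = height P.
Proof.
rewrite /height; set e := undup (elems P).
have ex_chain :
    0 < #|[pred b : (size e).-tuple bool | pairwise (cmp P) (mask b e)]|.
  apply/card_gt0P; exists [tuple of nseq (size e) false].
  by rewrite inE mask_false.
have [b b_chain ->] :=
  eq_bigmax_cond (fun b : (size e).-tuple bool => size (mask b e)) ex_chain.
have be_uniq : uniq (mask b e) by rewrite mask_uniq // undup_uniq.
exists (mask b e) => //; split=> //.
- by move=> x /mem_mask; rewrite mem_undup.
- exact/(uniq_pairwiseP cmp_sym).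
Qed.

End Chains.

Definition strict_pullback (T U : eqType) (A : fposet T) (B : fposet U)
    (f : T -> U) : Prop :=
  [/\ {in elems A, forall x, f x \in elems B},
      {in elems B, forall y, exists2 x, x \in elems A & f x = y} &
      {in elems A &, forall p q, rle A p q = (p == q) || rlt B (f p) (f q)}].

Section StrictPullback.
Variables (T U : eqType) (A : fposet T) (B : fposet U) (f : T -> U).

Hypothesis fAB : strict_pullback A B f.

Lemma pullback_cmp x y : x \in elems A -> y \in elems A -> x != y ->
  cmp A x y = (f x != f y) && cmp B (f x) (f y).
Proof.
case: fAB => _ _ rleA xA yA nxy; rewrite /cmp !rleA // /rlt.
by rewrite (negbTE nxy) [y == x]eq_sym (negbTE nxy) [f y == _]eq_sym -andb_orr.
Qed.

Lemma pullback_chain s : chain A s -> chain B (map f s).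
Proof.
case: (fAB) => fA _ _ [s_uniq sA s_cmp].
have f_inj : {in s &, injective f}.
  move=> x y xs ys fxy; apply/eqP/negPn/negP => nxy.
  by have := s_cmp x y xs ys nxy; rewrite pullback_cmp ?sA // fxy eqxx.
split; first by rewrite (map_inj_in_uniq f_inj).
  by move=> _ /mapP[x xs ->]; apply/fA/sA.
move=> _ _ /mapP[x xs ->] /mapP[y ys ->] nfxy.
have nxy : x != y by apply: contraNneq nfxy => ->.
by have := s_cmp x y xs ys nxy; rewrite pullback_cmp ?sA // => /andP[].
Qed.

Lemma pullback_lift_chain s : chain B s -> exists2 s', chain A s' & map f s' = s.
Proof.
case: (fAB) => _ f_onto _; elim: s => [|y s IHs]; first by exists [::].
case=> /= /andP[ys s_uniq] sB s_cmp.
have [|s' [s'_uniq s'A s'_cmp] fs's] := IHs.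
  split=> // [z zs|z z' zs z's]; first by apply: sB; rewrite inE zs orbT.
  by apply: s_cmp; rewrite inE ?zs ?z's orbT.
have [x xA fxy] := f_onto y (sB y (mem_head _ _)).
have xs' : x \notin s' by apply: contra ys => xs'; rewrite -fs's -fxy map_f.
have x_cmp z : z \in s' -> cmp A x z.
  move=> zs'; have nxz : x != z by apply: contraNneq xs' => ->.
  have fzs : f z \in s by rewrite -fs's map_f.
  have nyfz : y != f z by apply: contraNneq ys => ->.
  rewrite pullback_cmp ?(s'A z zs') // fxy nyfz.
  by apply: s_cmp; rewrite ?inE ?fzs ?eqxx ?orbT.
exists (x :: s'); last by rewrite /= fxy fs's.
split; first by rewrite /= xs' s'_uniq.
  by move=> z; rewrite inE => /orP[/eqP -> //|]; apply: s'A.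
move=> z z'; rewrite !inE => /orP[/eqP->|zs'] /orP[/eqP->|z's']; rewrite ?eqxx //.
- by move=> _; apply: x_cmp.
- by move=> _; rewrite cmp_sym; apply: x_cmp.
- exact: s'_cmp.
Qed.

Lemma pullback_height : height A = height B.
Proof.
apply/eqP; rewrite eqn_leq; apply/andP; split.
  have [s sA <-] := height_chain A.
  by rewrite -(size_map f); apply/chain_size_le_height/pullback_chain.
have [s sB <-] := height_chain B.
have [s' s'A <-] := pullback_lift_chain sB.
by rewrite size_map; apply: chain_size_le_height.
Qed.

Lemma pullback_covers x y : x \in elems A -> y \in elems A ->
  covers B (f x) (f y) -> covers A x y.
Proof.
case: fAB => fA _ rleA xA yA [_ _ fxy_lt fxy_cover].
have nxy : x != y by apply: contraTneq fxy_lt => ->; rewrite /rlt eqxx.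
split=> //; first by rewrite /rlt nxy rleA // fxy_lt orbT.
move=> z zA [/andP[nxz xz] /andP[nzy zy]].
move: xz zy; rewrite !rleA // (negbTE nxz) (negbTE nzy) /= => fxz fzy.
exact: (fxy_cover (f z) (fA z zA)).
Qed.

Lemma pullback_section x0 : x0 \in elems A -> exists g : U -> T,
  g (f x0) = x0 /\ {in elems B, forall y, g y \in elems A /\ f (g y) = y}.
Proof.
case: fAB => _ f_onto _ x0A.
exists (fun y => if y == f x0 then x0
                 else nth x0 (elems A) (find (fun x => f x == y) (elems A))).
split=> [|y yB]; first by rewrite eqxx.
case: eqP => [-> //|_].
have has_y : has (fun x => f x == y) (elems A).
  by have [x xA fxy] := f_onto y yB; apply/hasP; exists x; rewrite ?fxy.
by rewrite mem_nth -?has_find //; split=> //; apply/eqP/(nth_find x0 has_y).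
Qed.

Lemma pullback_filter (a : pred T) (b : pred U) :
  {in elems A, forall x, a x -> b (f x)} ->
  {in elems B, forall y, b y -> exists2 x, x \in elems A & a x && (f x == y)} ->
  strict_pullback (FPoset (filter a (elems A)) (rle A))
                  (FPoset (filter b (elems B)) (rle B)) f.
Proof.
case: fAB => fA _ rleA ab b_lift; split=> /=.
- by move=> x; rewrite !mem_filter => /andP[ax xA]; rewrite ab ?fA.
- move=> y; rewrite mem_filter => /andP[yb yB].
  have [x xA /andP[ax /eqP fxy]] := b_lift y yB yb.
  by exists x; rewrite // mem_filter ax.
- by move=> p q; rewrite !mem_filter => /andP[_ pA] /andP[_ qA]; apply: rleA.
Qed.

End StrictPullback.

Section StrictPullbackReflexive.
Variables (T U : eqType) (A : fposet T) (B : fposet U) (f : T -> U).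

Hypothesis fAB : strict_pullback A B f.
Hypothesis reflB : {in elems B, forall y, rle B y y}.

Lemma pullback_rle p q : p \in elems A -> q \in elems A ->
  rle A p q -> rle B (f p) (f q).
Proof.
case: fAB => fA _ rleA pA qA; rewrite rleA // => /orP[/eqP <-|/andP[] //].
exact/reflB/fA.
Qed.

(* Take [p] itself when [y = f p], any preimage otherwise. *)
Lemma pullback_preimage p y : p \in elems A -> y \in elems B ->
  exists2 x, x \in elems A &
    [/\ f x = y, rle A p x = rle B (f p) y & rle A x p = rle B y (f p)].
Proof.
case: fAB => fA f_onto rleA pA yB.
have [-> | nyp] := eqVneq y (f p).
  by exists p; rewrite // !rleA // eqxx reflB ?fA.
have [x xA fxy] := f_onto y yB.
have npx : p != x by apply: contraNneq nyp => px; rewrite -fxy px.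
exists x => //; split=> //; rewrite rleA // fxy /rlt.
  by rewrite (negbTE npx) eq_sym nyp.
by rewrite eq_sym (negbTE npx) nyp.
Qed.

Lemma pullback_upset p : p \in elems A ->
  strict_pullback (upset A p) (upset B (f p)) f.
Proof.
move=> pA; apply: (pullback_filter fAB) => [x xA|y yB yb].
  exact: pullback_rle.
have [x xA [fxy px _]] := pullback_preimage pA yB.
by exists x; rewrite // px yb fxy eqxx.
Qed.

Lemma pullback_downset p : p \in elems A ->
  strict_pullback (downset A p) (downset B (f p)) f.
Proof.
move=> pA; apply: (pullback_filter fAB) => [x xA|y yB yb].
  exact: pullback_rle.
have [x xA [fxy _ xp]] := pullback_preimage pA yB.
by exists x; rewrite // xp yb fxy eqxx.
Qed.

Lemma pullback_Rint p : p \in elems A -> Rint A p = Rint B (f p).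
Proof.
move=> pA; rewrite /Rint (pullback_height fAB).
rewrite (pullback_height (pullback_upset pA)).
by rewrite (pullback_height (pullback_downset pA)).
Qed.

Lemma pullback_RAll_Rplus : strict_pullback (RAll A) (Rplus B) (Rint B \o f).
Proof.
case: fAB => fA f_onto _; split=> /=.
- by move=> x xA; rewrite map_f ?fA.
- by move=> _ /mapP[y yB ->]; have [x xA <-] := f_onto y yB; exists x.
- move=> p q pA qA /=.
  by rewrite -!pullback_Rint // /weaklt /rlt [Rint A q == _]eq_sym.
Qed.

Lemma pullback_top t : is_top A t -> is_top B (f t).
Proof.
case: (fAB) => fA f_onto _ [tA t_max].
split=> [|_ /f_onto[x xA <-]]; first exact: fA.
exact/(pullback_rle xA tA)/t_max.
Qed.

Lemma pullback_bot b : is_bot A b -> is_bot B (f b).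
Proof.
case: (fAB) => fA f_onto _ [bA b_min].
split=> [|_ /f_onto[x xA <-]]; first exact: fA.
exact/(pullback_rle bA xA)/b_min.
Qed.

End StrictPullbackReflexive.

Lemma strict_pullback_id (T : eqType) (P : fposet T) :
  {in elems P, forall x, rle P x x} -> strict_pullback P P id.
Proof.
move=> reflP; split=> // [y yP|p q pP qP]; first by exists y.
by rewrite /rlt; case: eqVneq => [->|]; rewrite ?reflP.
Qed.

Lemma pullback_graded (T U : eqType) (A : fposet T) (B : fposet U) (f : T -> U) :
  is_poset B -> strict_pullback A B f -> graded A -> graded B.
Proof.
move=> posetB fAB [[_ [_ [b b_bot]]] [t [t_top [rho [rho_t rho_lt rho_cover]]]]].
have [reflB _ _] := posetB.
have [g [gt g_sec]] := pullback_section fAB (proj1 t_top).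
have ft_top := pullback_top fAB reflB t_top.
split.
  split=> //; split; first by exists (f t).
  by exists (f b); apply: pullback_bot b_bot.
exists (f t); split=> //.
exists (rho \o g); split=> /=; first by rewrite gt.
  move=> y yB; rewrite -(pullback_height fAB).
  by apply: rho_lt; case: (g_sec y yB).
move=> y z yz; have [yB zB _ _] := yz.
have [gyA fgy] := g_sec y yB; have [gzA fgz] := g_sec z zB.
by apply/rho_cover/(pullback_covers fAB) => //; rewrite fgy fgz.
Qed.

Lemma Rplus_poset (U : eqType) (X : fposet U) : is_poset (Rplus X).
Proof.
split=> /=.
- by move=> x _; rewrite /weakle !leqnn.
- move=> [a b] [c d] _ _; rewrite /weakle /= => /andP[ca db] /andP[ac bd].
  by congr pair; apply/eqP; rewrite eqn_leq ?ac ?ca ?bd ?db.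
- move=> [a b] [c d] [e h] _ _ _; rewrite /weakle /= => /andP[ca db] /andP[ec hd].
  by rewrite (leq_trans ec ca) (leq_trans hd db).
Qed.

Lemma iter_strict_pullback (T : eqType) (P : fposet T) (m : nat) : is_poset P ->
  is_poset (projT2 (Rplus_iter m P)) /\
  exists f : T -> projT1 (Rplus_iter m P),
    strict_pullback (RAll_iter m P) (projT2 (Rplus_iter m P)) f.
Proof.
move=> posetP; elim: m => [|m [posetPm [f fPm]]] /=.
  by split=> //; exists id; apply: strict_pullback_id; case: posetP.
split; first exact: Rplus_poset.
have [reflPm _ _] := posetPm.
by exists (Rint (projT2 (Rplus_iter m P)) \o f); apply: pullback_RAll_Rplus.
Qed.

Theorem lemma2 (T : eqType) (P : fposet T) (m : nat) :
  bounded P -> 2 <= size (undup (elems P)) ->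
  graded (RAll_iter m P) -> graded_s (Rplus_iter m P).
Proof.
move=> [posetP _] _ gradedA.
have [posetPm [f fPm]] := iter_strict_pullback m posetP.
exact: pullback_graded posetPm fPm gradedA.
Qed.
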